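(* Let $G=(V,E)$ be a finite simple undirected graph with zipper constraint collection $\mathcal{Z}$, let $D\subseteq Z^2$, and let $\mathbb{S}$ be a downstream-enabled prescription on $D$. If $\mathcal{K}^+$ is a clique cover of the augmented graph $G^+(\mathbb{S})$, then there is a clique cover $\mathcal{K}$ of $G$ with $|\mathcal{K}|\le|\mathcal{K}^+|$ such that: (i) $\mathcal{K}$ is faithful to $\mathbb{S}$; and (ii) $\mathcal{K}$ satisfies every zipper constraint $(U,W,y)\in\mathcal{Z}$ with $U\in D$ and $W\in D$.
   Context: A clique cover of a graph is a collection of cliques whose union is the vertex set. A zipper constraint collection is a finite set $\mathcal{Z}=\{(U_1,W_1,y_1),\dots,(U_m,W_m,y_m)\}$, where each $U_i,W_i\in E$ is an edge of $G$ (a 2-element vertex set) and each $y_i$ is a label. A clique cover $\mathcal{K}$ satisfies the constraint $(U,W,y)$ if either no clique of $\mathcal{K}$ contains $U$, or some clique of $\mathcal{K}$ contains $W$. Let $Z^2=\{U_1,\dots,U_m,W_1,\dots,W_m\}$. Write $P\uparrow Q$ if $(P,Q,y)\in\mathcal{Z}$ for some $y$. Write $P_a\rightsquigarrow P_b$ (''$P_b$ is downstream of $P_a$'') if $P_a\uparrow P_b$, or if $P_a\uparrow P_c$ for some $P_c\in Z^2$ with $P_c\rightsquigarrow P_b$; that is, $\rightsquigarrow$ is the transitive closure of $\uparrow$. A prescription on $D\subseteq Z^2$ is a subset $\mathbb{S}\subseteq D$; the elements of $D\setminus\mathbb{S}$ are off pairs. $\mathbb{S}$ is downstream enabled if, whenever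 $P_a\in\mathbb{S}$ and $P_a\rightsquigarrow P_b$, we have $P_b\in\mathbb{S}$ or $P_b\notin D$. A clique cover $\mathcal{K}$ of $G$ is faithful to $\mathbb{S}$ if every $P\in\mathbb{S}$ lies in some clique of $\mathcal{K}$ and no $P\in D\setminus\mathbb{S}$ lies in any clique of $\mathcal{K}$. Let $G'=(V,E\setminus(D\setminus\mathbb{S}))$. The augmented graph $G^+(\mathbb{S})$ has vertex set $\{[u]:u\in V\}\cup\{[u,w]:\{u,w\}\in\mathbb{S}\}$, where each $[A]$ is a new formal vertex labeled by the set $A$. Two distinct vertices $[A],[B]$ are adjacent if and only if $A\cup B$ is a clique in $G'$. *)

From mathcomp Require Import all_boot.
Set Implicit Arguments.
Unset Strict Implicit.
Unset Printing Implicit Defensive.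

Section Defs.
Variable T : finType.

Definition simple_graph (e : rel T) : Prop := symmetric e /\ irreflexive e.

Definition is_edge (e : rel T) (A : {set T}) : bool :=
  [exists u, exists w, e u w && (A == [set u; w])].

Definition clique (X : finType) (adj : rel X) (A : {set X}) : bool :=
  [forall x in A, forall y in A, (x != y) ==> adj x y].

Definition clique_cover (X : finType) (Vs : {set X}) (adj : rel X)
    (KK : {set {set X}}) : Prop :=
  (forall K, K \in KK -> K \subset Vs /\ clique adj K) /\
  \bigcup_(K in KK) K = Vs.

Variable Y : eqType.
Definition zipper_coll (e : rel T) (Z : seq ({set T} * {set T} * Y)) : Prop :=
  forall z, z \in Z -> is_edge e z.1.1 /\ is_edge e z.1.2.

Definition Z2 (Z : seq ({set T} * {set T} * Y)) : {set {set T}} :=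
  [set P | has (fun z => (z.1.1 == P) || (z.1.2 == P)) Z].

Definition up (Z : seq ({set T} * {set T} * Y)) : rel {set T} :=
  fun P Q => has (fun z => (z.1.1 == P) && (z.1.2 == Q)) Z.

Definition downstream (Z : seq ({set T} * {set T} * Y)) : rel {set T} :=
  fun P Q => [exists R, up Z P R && connect (up Z) R Q].

Definition downstream_enabled (Z : seq ({set T} * {set T} * Y))
    (D S : {set {set T}}) : Prop :=
  forall Pa Pb, Pa \in S -> downstream Z Pa Pb -> (Pb \in S) \/ (Pb \notin D).

Definition faithful (D S : {set {set T}}) (KK : {set {set T}}) : Prop :=
  (forall P, P \in S -> exists2 K, K \in KK & P \subset K) /\
  (forall P, P \in D :\: S -> forall K, K \in KK -> ~~ (P \subset K)).

Definition satisfies (KK : {set {set T}}) (z : {set T} * {set T} * Y) : Prop :=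
  (forall K, K \in KK -> ~~ (z.1.1 \subset K)) \/ (exists2 K, K \in KK & z.1.2 \subset K).

Definition adj' (e : rel T) (D S : {set {set T}}) : rel T :=
  fun x y => e x y && ([set x; y] \notin D :\: S).

(* augmented graph G^+(S): formal vertex [A] is represented by its label A *)
Definition aug_vertices (S : {set {set T}}) : {set {set T}} :=
  [set [set u] | u : T] :|: S.

Definition aug_adj (e : rel T) (D S : {set {set T}}) : rel {set T} :=
  fun A B => clique (adj' e D S) (A :|: B).

End Defs.

From mathcomp Require Import all_boot.

Set Implicit Arguments.
Unset Strict Implicit.
Unset Printing Implicit Defensive.

(* Forgetting the labels turns a clique cover of G^+(S) into one of G: the
   cover of the labels of a clique of G^+(S) is a clique of G', because each
   label is a vertex or a prescribed edge of G' and any two distinct labels of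
   the clique jointly span a clique of G'. The singleton labels cover V. A
   prescribed pair lies in the image of any clique containing its vertex of
   G^+(S), while an off pair is not an edge of G', so it lies in no clique of
   G'. For a constraint (U, W, y) with U, W in D: if U is off, no clique
   contains U; if U is prescribed, W is downstream of U, hence prescribed too,
   hence covered. *)

Section Cliques.
Variable X : finType.

Lemma cliqueP (adj : rel X) (A : {set X}) :
  reflect {in A &, forall x y, x != y -> adj x y} (clique adj A).
Proof.
apply: (iffP forall_inP) => [cl x y xA yA | cl x xA].
- by have /forall_inP/(_ y yA)/implyP := cl x xA.
- by apply/forall_inP => y yA; apply/implyP; apply: cl.
Qed.

Lemma sub_clique (adj1 adj2 : rel X) (A : {set X}) :
  subrel adj1 adj2 -> clique adj1 A -> clique adj2 A.
Proof.
move=> sub12 /cliqueP cl; apply/cliqueP => x y xA yA xy.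
exact/sub12/cl.
Qed.

End Cliques.

Section Edges.
Variables (T : finType) (e : rel T).

Lemma is_edge_pair (A : {set T}) (x y : T) :
  symmetric e -> is_edge e A -> x \in A -> y \in A -> x != y ->
  e x y /\ [set x; y] = A.
Proof.
move=> sym /existsP[u /existsP[w /andP[euw /eqP->]]].
rewrite !inE => /orP[]/eqP-> /orP[]/eqP->; rewrite ?eqxx // => _.
by rewrite sym setUC.
Qed.

Lemma Z2_is_edge (Y : eqType) (Z : seq ({set T} * {set T} * Y)) (A : {set T}) :
  zipper_coll e Z -> A \in Z2 Z -> is_edge e A.
Proof.
by move=> zc; rewrite inE => /hasP[z /zc[U_edge W_edge] /orP[]/eqP <-].
Qed.

Lemma off_pair_notin_clique (D S : {set {set T}}) (P K : {set T}) :
  irreflexive e -> P \in D :\: S -> is_edge e P ->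
  clique (adj' e D S) K -> ~~ (P \subset K).
Proof.
move=> irr offP /existsP[u /existsP[w /andP[euw /eqP Puw]]] /cliqueP cl.
apply/negP=> /subsetP PK.
have uw : u != w by apply: contraTneq euw => ->; rewrite irr.
have [uP wP] : u \in P /\ w \in P by rewrite Puw !inE !eqxx orbT.
by move: (cl u w (PK u uP) (PK w wP) uw); rewrite /adj' -Puw offP andbF.
Qed.

End Edges.

Section Augmented.
Variables (T : finType) (e : rel T) (D S : {set {set T}}).
Hypothesis sym_e : symmetric e.
Hypothesis S_edges : {in S, forall A, is_edge e A}.

Lemma aug_vertex_clique (A : {set T}) :
  A \in aug_vertices S -> clique (adj' e D S) A.
Proof.
case/setUP=> [/imsetP[u _ ->] | AS]; apply/cliqueP => x y xA yA xy.
  by move: xA yA xy; rewrite !inE => /eqP-> /eqP->; rewrite eqxx.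
have [exy xyA] := is_edge_pair sym_e (S_edges AS) xA yA xy.
by rewrite /adj' exy xyA inE AS.
Qed.

Lemma cover_aug_clique (Kp : {set {set T}}) :
  Kp \subset aug_vertices S -> clique (aug_adj e D S) Kp ->
  clique (adj' e D S) (cover Kp).
Proof.
move=> /subsetP Kp_aug /cliqueP Kp_cl; apply/cliqueP => x y.
move=> /bigcupP[A AK xA] /bigcupP[B BK yB] xy.
have [eqAB | AB] := eqVneq A B.
  rewrite -{}eqAB in yB.
  by have /cliqueP := aug_vertex_clique (Kp_aug A AK); apply.
by have /cliqueP := Kp_cl A B AK BK AB; apply; rewrite // inE ?xA ?yB ?orbT.
Qed.

Variable KKp : {set {set {set T}}}.
Hypothesis KKp_cover : clique_cover (aug_vertices S) (aug_adj e D S) KKp.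

Lemma aug_vertex_covered (A : {set T}) :
  A \in aug_vertices S -> exists2 K, K \in cover @: KKp & A \subset K.
Proof.
rewrite -KKp_cover.2 => /bigcupP[Kp KpK AK].
by exists (cover Kp); [exact: imset_f | exact: bigcup_sup].
Qed.

Lemma cover_clique_cover : clique_cover [set: T] e (cover @: KKp).
Proof.
split=> [_ /imsetP[Kp KpK ->] | ].
  have [Kp_aug Kp_cl] := KKp_cover.1 Kp KpK.
  split; first exact: subsetT.
  by apply: sub_clique (cover_aug_clique Kp_aug Kp_cl) => x y /andP[].
apply/setP=> u; rewrite inE; apply/bigcupP.
have [|K KK uK] := @aug_vertex_covered [set u]; first by rewrite inE imset_f.
by exists K => //; apply: (subsetP uK); rewrite set11.
Qed.

Lemma cover_faithful :
  irreflexive e -> {in D, forall A, is_edge e A} -> faithful D S (cover @: KKp).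
Proof.
move=> irr D_edges; split=> [P PS | P offP _ /imsetP[Kp KpK ->]].
  by apply: aug_vertex_covered; rewrite inE PS orbT.
have [Kp_aug Kp_cl] := KKp_cover.1 Kp KpK.
apply: off_pair_notin_clique (cover_aug_clique Kp_aug Kp_cl) => //.
by apply: D_edges; case/setDP: offP.
Qed.

End Augmented.

Section Zippers.
Variables (T : finType) (Y : eqType) (Z : seq ({set T} * {set T} * Y)).

Lemma up_downstream (P Q : {set T}) : up Z P Q -> downstream Z P Q.
Proof. by move=> PQ; apply/existsP; exists Q; rewrite PQ connect0. Qed.

Lemma zipper_up z : z \in Z -> up Z z.1.1 z.1.2.
Proof. by move=> zZ; apply/hasP; exists z; rewrite ?eqxx. Qed.

Lemma faithful_satisfies (D S KK : {set {set T}}) z :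
  faithful D S KK -> downstream_enabled Z D S ->
  z \in Z -> z.1.1 \in D -> z.1.2 \in D -> satisfies KK z.
Proof.
move=> [S_covered off_uncovered] de zZ UD WD.
have [US | US] := boolP (z.1.1 \in S); [right | left].
  have [WS | ] := de _ _ US (up_downstream (zipper_up zZ)); last by rewrite WD.
  exact: S_covered.
by move=> K KK_K; apply: off_uncovered; rewrite ?inE ?US.
Qed.

End Zippers.

Theorem lemma4 (T : finType) (Y : eqType) (e : rel T)
    (Z : seq ({set T} * {set T} * Y)) (D S : {set {set T}})
    (KKp : {set {set {set T}}}) :
  simple_graph e ->
  zipper_coll e Z ->
  D \subset Z2 Z ->
  S \subset D ->
  downstream_enabled Z D S ->
  clique_cover (aug_vertices S) (aug_adj e D S) KKp ->
  exists KK : {set {set T}},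
    [/\ clique_cover [set: T] e KK,
        #|KK| <= #|KKp|,
        faithful D S KK &
        forall z, z \in Z -> z.1.1 \in D -> z.1.2 \in D -> satisfies KK z].
Proof.
move=> [sym irr] zc DZ SD de KKp_cover.
have D_edges : {in D, forall A, is_edge e A}.
  by move=> A /(subsetP DZ); apply: Z2_is_edge.
have S_edges : {in S, forall A, is_edge e A}.
  by move=> A /(subsetP SD); apply: D_edges.
have faithKK := cover_faithful sym S_edges KKp_cover irr D_edges.
exists (cover @: KKp); split=> //.
- exact: (cover_clique_cover sym S_edges KKp_cover).
- exact: leq_imset_card.
- by move=> z *; apply: faithful_satisfies de _ _ _.
Qed.
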